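(* Let $\mathcal{M}$ be an $L5$-model and let $\gamma\colon V\to M$ be an assignment in $\mathcal{M}$. Then there exist an $L5$-frame $(W,R)$, an $R$-maximal world $w_T\in W$ and an assignment $g\colon V\to\mathrm{Pow}(W)$ in $(W,R)$ such that for all formulas $\varphi$: $$(\mathcal{M},\gamma)\vDash\varphi \iff (w_T,g)\vDash\varphi.$$
   Context: Formulas are built from a countable set $V$ of propositional variables using $\wedge,\vee,\rightarrow,\bot$ and the unary modal operator $\square$; $\top$ abbreviates $\bot\rightarrow\bot$. An $L5$-model is a structure $\mathcal{M}=(M,\mathit{TRUE},f_\bot,f_\top,f_\rightarrow,f_\vee,f_\wedge,f_\square)$ such that $(M,f_\bot,f_\top,f_\rightarrow,f_\vee,f_\wedge)$ is a Heyting algebra (bottom $f_\bot$, top $f_\top$, relative pseudo-complement $f_\rightarrow$, lattice order $\le$). Moreover, $\mathit{TRUE}\subseteq M$ is an ultrafilter, and $f_\square\colon M\to M$ satisfies, for all $m,m',m''\in M$: (i) $f_\square(m)\le m$; (ii) $f_\square(f_\rightarrow(m,m'))\le f_\rightarrow(f_\square(f_\rightarrow(m',m'')),f_\square(f_\rightarrow(m,m'')))$; (iii) $f_\square(f_\vee(m,m'))\le f_\vee(f_\square(m),f_\square(m'))$; (iv) $f_\square(m)\in\mathit{TRUE}$ iff $m=f_\top$; (v) $f_\square(m)=f_\top$ if $m=f_\top$, and $f_\square(m)=f_\bot$ otherwise. An assignment $\gamma\colon V\to M$ extends to all formulas by: - $\gamma(\bot)=f_\bot$; - $\gamma(\square\varphi)=f_\square(\gamma(\varphi))$;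 - $\gamma(\varphi*\psi)=f_*(\gamma(\varphi),\gamma(\psi))$ for $*\in\{\vee,\wedge,\rightarrow\}$. Satisfaction is $(\mathcal{M},\gamma)\vDash\varphi$ iff $\gamma(\varphi)\in\mathit{TRUE}$. An $L5$-frame is a pair $(W,R)$ with the following properties: - $W$ is a non-empty set; - $R$ is a partial order on $W$; - there is an $R$-smallest element $w_B$; - every $R$-chain has an upper bound in $W$. An assignment in $(W,R)$ is a map $g\colon V\to\mathrm{Pow}(W)$ with $wRw'$ and $w\in g(x)$ implying $w'\in g(x)$. Kripke satisfaction is defined as follows: - $(w,g)\nvDash\bot$; - $(w,g)\vDash x$ iff $w\in g(x)$; - $\vee,\wedge$ are evaluated pointwise; - $(w,g)\vDash\varphi\rightarrow\psi$ iff for all $w'$ with $wRw'$, $(w',g)\vDash\varphi$ implies $(w',g)\vDash\psi$; - $(w,g)\vDash\square\varphi$ iff $(w_B,g)\vDash\varphi$. *)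

Definition var := nat.

Inductive formula : Type :=
| FVar : var -> formula
| FBot : formula
| FAnd : formula -> formula -> formula
| FOr  : formula -> formula -> formula
| FImp : formula -> formula -> formula
| FBox : formula -> formula.

Definition FTop : formula := FImp FBot FBot.

Record L5Model : Type := {
  M : Type;
  TRUE : M -> Prop;
  f_bot : M;
  f_top : M;
  f_imp : M -> M -> M;
  f_or  : M -> M -> M;
  f_and : M -> M -> M;
  f_box : M -> M
}.

Definition mle (A : L5Model) (x y : M A) : Prop := f_and A x y = x.

Definition is_heyting (A : L5Model) : Prop :=
  (forall x y z, f_and A x (f_and A y z) = f_and A (f_and A x y) z) /\
  (forall x y z, f_or A x (f_or A y z) = f_or A (f_or A x y) z) /\
  (forall x y, f_and A x y = f_and A y x) /\
  (forall x y, f_or A x y = f_or A y x) /\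
  (forall x y, f_and A x (f_or A x y) = x) /\
  (forall x y, f_or A x (f_and A x y) = x) /\
  (forall x, mle A (f_bot A) x) /\
  (forall x, mle A x (f_top A)) /\
  (forall x y z, mle A (f_and A z x) y <-> mle A z (f_imp A x y)).

Definition is_filter (A : L5Model) (F : M A -> Prop) : Prop :=
  F (f_top A) /\
  (forall x y, F x -> mle A x y -> F y) /\
  (forall x y, F x -> F y -> F (f_and A x y)).

Definition is_proper_filter (A : L5Model) (F : M A -> Prop) : Prop :=
  is_filter A F /\ ~ F (f_bot A).

Definition is_ultrafilter (A : L5Model) (F : M A -> Prop) : Prop :=
  is_proper_filter A F /\
  (forall G, is_proper_filter A G -> (forall x, F x -> G x) -> forall x, G x -> F x).

Definition is_L5_model (A : L5Model) : Prop :=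
  is_heyting A /\
  is_ultrafilter A (TRUE A) /\
  (forall m, mle A (f_box A m) m) /\
  (forall m m' m'',
     mle A (f_box A (f_imp A m m'))
           (f_imp A (f_box A (f_imp A m' m'')) (f_box A (f_imp A m m'')))) /\
  (forall m m', mle A (f_box A (f_or A m m')) (f_or A (f_box A m) (f_box A m'))) /\
  (forall m, TRUE A (f_box A m) <-> m = f_top A) /\
  (forall m, (m = f_top A -> f_box A m = f_top A) /\
             (m <> f_top A -> f_box A m = f_bot A)).

Fixpoint eval (A : L5Model) (gamma : var -> M A) (phi : formula) : M A :=
  match phi with
  | FVar x => gamma x
  | FBot => f_bot A
  | FAnd p q => f_and A (eval A gamma p) (eval A gamma q)
  | FOr p q => f_or A (eval A gamma p) (eval A gamma q)
  | FImp p q => f_imp A (eval A gamma p) (eval A gamma q)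
  | FBox p => f_box A (eval A gamma p)
  end.

Definition msat (A : L5Model) (gamma : var -> M A) (phi : formula) : Prop :=
  TRUE A (eval A gamma phi).

Definition is_chain {W : Type} (R : W -> W -> Prop) (C : W -> Prop) : Prop :=
  forall x y, C x -> C y -> R x y \/ R y x.

Definition is_L5_frame (W : Type) (R : W -> W -> Prop) (wB : W) : Prop :=
  (* W is non-empty: witnessed by wB *)
  (forall w, R w w) /\
  (forall u v w, R u v -> R v w -> R u w) /\
  (forall u v, R u v -> R v u -> u = v) /\
  (forall w, R wB w) /\
  (forall C : W -> Prop, is_chain R C -> exists b, forall x, C x -> R x b).

Definition is_frame_assignment {W : Type} (R : W -> W -> Prop)
  (g : var -> W -> Prop) : Prop :=
  forall x w w', R w w' -> g x w -> g x w'.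

Fixpoint ksat {W : Type} (R : W -> W -> Prop) (wB : W) (g : var -> W -> Prop)
  (w : W) (phi : formula) : Prop :=
  match phi with
  | FVar x => g x w
  | FBot => False
  | FAnd p q => ksat R wB g w p /\ ksat R wB g w q
  | FOr p q => ksat R wB g w p \/ ksat R wB g w q
  | FImp p q => forall w', R w w' -> ksat R wB g w' p -> ksat R wB g w' q
  | FBox p => ksat R wB g wB p
  end.

(** The canonical frame of an L5-model: worlds are the prime filters of the
    subalgebra of definable elements [eval A gamma phi], ordered by inclusion.
    Its least world is [{⊤}] and [TRUE] restricted to the definable elements is
    a maximal world [wT]. Axioms (iii) and (v) make [⊤] join-irreducible, so
    [{⊤}] is prime, and by (v) [□a] lies in a world iff [a = ⊤], i.e. iff [a]
    lies in [{⊤}].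
    The definable elements are countable, so prime filters avoiding a given
    element are obtained without Zorn's lemma, by deciding the definable
    elements one at a time; this yields the implication case of the truth
    lemma [w ⊩ phi <-> eval phi ∈ w], which at [wT] is the theorem. *)

From Stdlib Require Import Classical FunctionalExtensionality PropExtensionality ProofIrrelevance.
From mathcomp Require choice.

Set Implicit Arguments.
Unset Strict Implicit.

Module FormulaEnumeration.
Import choice.

Fixpoint formula_tree (p : formula) : GenTree.tree nat :=
  match p with
  | FVar x => GenTree.Leaf x
  | FBot => GenTree.Node 0 nil
  | FAnd p q => GenTree.Node 1 (cons (formula_tree p) (cons (formula_tree q) nil))
  | FOr p q => GenTree.Node 2 (cons (formula_tree p) (cons (formula_tree q) nil))
  | FImp p q => GenTree.Node 3 (cons (formula_tree p) (cons (formula_tree q) nil))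
  | FBox p => GenTree.Node 4 (cons (formula_tree p) nil)
  end.

Fixpoint tree_formula (t : GenTree.tree nat) : formula :=
  match t with
  | GenTree.Leaf x => FVar x
  | GenTree.Node 1 (cons t1 (cons t2 nil)) => FAnd (tree_formula t1) (tree_formula t2)
  | GenTree.Node 2 (cons t1 (cons t2 nil)) => FOr (tree_formula t1) (tree_formula t2)
  | GenTree.Node 3 (cons t1 (cons t2 nil)) => FImp (tree_formula t1) (tree_formula t2)
  | GenTree.Node 4 (cons t1 nil) => FBox (tree_formula t1)
  | _ => FBot
  end.

Lemma formula_treeK p : tree_formula (formula_tree p) = p.
Proof. induction p; simpl; congruence. Qed.

Definition enum_formula (n : nat) : formula :=
  match (unpickle n : option (GenTree.tree nat)) with
  | Some t => tree_formula t
  | None => FBot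
  end.

Lemma enum_formula_surj p : exists n, enum_formula n = p.
Proof.
  exists (pickle (formula_tree p)). unfold enum_formula.
  rewrite pickleK. apply formula_treeK.
Qed.

End FormulaEnumeration.
Import FormulaEnumeration.

Section Algebra.

Variable A : L5Model.

Local Notation "x ⊑ y" := (mle A x y) (at level 70).
Local Notation "x ⊓ y" := (f_and A x y) (at level 40, left associativity).
Local Notation "x ⊔ y" := (f_or A x y) (at level 50, left associativity).
Local Notation "x ⇒ y" := (f_imp A x y) (at level 55, right associativity).
Local Notation "⊤" := (f_top A).
Local Notation "⊥" := (f_bot A).

Section Heyting.

Hypothesis HH : is_heyting A.

Lemma meetA x y z : x ⊓ (y ⊓ z) = x ⊓ y ⊓ z.
Proof. destruct HH as (H & _); apply H. Qed.

Lemma joinA x y z : x ⊔ (y ⊔ z) = x ⊔ y ⊔ z.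
Proof. destruct HH as (_ & H & _); apply H. Qed.

Lemma meetC x y : x ⊓ y = y ⊓ x.
Proof. destruct HH as (_ & _ & H & _); apply H. Qed.

Lemma joinC x y : x ⊔ y = y ⊔ x.
Proof. destruct HH as (_ & _ & _ & H & _); apply H. Qed.

Lemma meetKU x y : x ⊓ (x ⊔ y) = x.
Proof. destruct HH as (_ & _ & _ & _ & H & _); apply H. Qed.

Lemma joinKI x y : x ⊔ (x ⊓ y) = x.
Proof. destruct HH as (_ & _ & _ & _ & _ & H & _); apply H. Qed.

Lemma bot_mle x : ⊥ ⊑ x.
Proof. destruct HH as (_ & _ & _ & _ & _ & _ & H & _); apply H. Qed.

Lemma mle_top x : x ⊑ ⊤.
Proof. destruct HH as (_ & _ & _ & _ & _ & _ & _ & H & _); apply H. Qed.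

Lemma mle_imp x y z : z ⊓ x ⊑ y <-> z ⊑ x ⇒ y.
Proof. destruct HH as (_ & _ & _ & _ & _ & _ & _ & _ & H); apply H. Qed.

Lemma meetxx x : x ⊓ x = x.
Proof. rewrite <- (joinKI x x) at 2. apply meetKU. Qed.

Lemma joinxx x : x ⊔ x = x.
Proof. rewrite <- (meetKU x x) at 2. apply joinKI. Qed.

Lemma mle_refl x : x ⊑ x.
Proof. apply meetxx. Qed.

Lemma mle_trans x y z : x ⊑ y -> y ⊑ z -> x ⊑ z.
Proof.
  unfold mle. intros Exy Eyz.
  rewrite <- Exy at 1. rewrite <- meetA, Eyz. exact Exy.
Qed.

Lemma mle_antisym x y : x ⊑ y -> y ⊑ x -> x = y.
Proof. unfold mle. intros Exy Eyx. rewrite <- Exy, meetC. exact Eyx. Qed.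

Lemma meet_mlel x y : x ⊓ y ⊑ x.
Proof. unfold mle. rewrite <- meetA, (meetC y x), meetA, meetxx. reflexivity. Qed.

Lemma meet_mler x y : x ⊓ y ⊑ y.
Proof. unfold mle. rewrite <- meetA, meetxx. reflexivity. Qed.

Lemma mle_meet x y z : z ⊑ x -> z ⊑ y -> z ⊑ x ⊓ y.
Proof. unfold mle. intros Ex Ey. rewrite meetA, Ex, Ey. reflexivity. Qed.

Lemma join_mgel x y : x ⊑ x ⊔ y.
Proof. apply meetKU. Qed.

Lemma join_mger x y : y ⊑ x ⊔ y.
Proof. rewrite joinC. apply meetKU. Qed.

Lemma mle_joinr x y : x ⊑ y -> x ⊔ y = y.
Proof. unfold mle. intro E. rewrite <- E at 1. rewrite joinC, meetC. apply joinKI. Qed.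

Lemma join_mle x y z : x ⊑ z -> y ⊑ z -> x ⊔ y ⊑ z.
Proof.
  intros Ex Ey. apply mle_joinr in Ex. apply mle_joinr in Ey.
  assert (Ez : z = x ⊔ y ⊔ z) by (rewrite <- joinA, Ey, Ex; reflexivity).
  unfold mle. rewrite Ez. apply meetKU.
Qed.

Lemma meet_monol x x' y : x ⊑ x' -> x ⊓ y ⊑ x' ⊓ y.
Proof.
  intro E. apply mle_meet.
  - exact (mle_trans (meet_mlel x y) E).
  - apply meet_mler.
Qed.

Lemma meet_imp_mle a b : a ⊓ (a ⇒ b) ⊑ b.
Proof. rewrite meetC. apply mle_imp, mle_refl. Qed.

Lemma meet_join_mle g x y b : g ⊓ x ⊑ b -> g ⊓ y ⊑ b -> g ⊓ (x ⊔ y) ⊑ b.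
Proof.
  intros Ex Ey. rewrite meetC. apply mle_imp.
  apply join_mle; apply mle_imp; rewrite meetC; assumption.
Qed.

Lemma imp_bot_bot : ⊥ ⇒ ⊥ = ⊤.
Proof. apply mle_antisym; [apply mle_top | apply mle_imp, meet_mler]. Qed.

(** With [P] the definable elements, these are the filters of the subalgebra
    they form. *)
Record filter_in (P F : M A -> Prop) : Prop := {
  filter_sub : forall z, F z -> P z;
  filter_top : F ⊤;
  filter_up : forall x y, F x -> x ⊑ y -> P y -> F y;
  filter_meet : forall x y, F x -> F y -> F (x ⊓ y)
}.

Definition filter_adjoin (P F : M A -> Prop) (c z : M A) : Prop :=
  P z /\ exists g, F g /\ g ⊓ c ⊑ z.

Section FilterIn.

Variables P F : M A -> Prop.
Hypothesis HF : filter_in P F.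

Lemma filter_in_ext G : (forall z, F z <-> G z) -> filter_in P G.
Proof.
  intro E. destruct HF as [Fsub Ftop Fup Fmeet].
  split; intros; repeat match goal with H : G _ |- _ => apply E in H end;
    try apply E; eauto.
Qed.

Lemma filter_adjoin_filter c :
  P ⊤ -> (forall x y, P x -> P y -> P (x ⊓ y)) -> filter_in P (filter_adjoin P F c).
Proof.
  intros Ptop Pmeet. split.
  - intros z [Pz _]. exact Pz.
  - split; [exact Ptop|]. exists ⊤. split; [apply HF | apply mle_top].
  - intros x y [_ [g [Fg Eg]]] Exy Py. split; [exact Py|].
    exists g. split; [exact Fg | exact (mle_trans Eg Exy)].
  - intros x y [Px [g [Fg Eg]]] [Py [g' [Fg' Eg']]]. split; [auto|].
    exists (g ⊓ g'). split; [apply HF; assumption|]. apply mle_meet.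
    + exact (mle_trans (meet_monol c (meet_mlel g g')) Eg).
    + exact (mle_trans (meet_monol c (meet_mler g g')) Eg').
Qed.

Lemma filter_adjoin_incl c z : F z -> filter_adjoin P F c z.
Proof.
  intro Fz. split; [exact (filter_sub HF Fz)|].
  exists z. split; [exact Fz | apply meet_mlel].
Qed.

Lemma filter_adjoin_elem c : P c -> filter_adjoin P F c c.
Proof.
  intro Pc. split; [exact Pc|].
  exists ⊤. split; [apply HF | apply meet_mler].
Qed.

Lemma filter_in_prime b :
  P b -> ~ F b -> (forall x, P x -> ~ F x -> filter_adjoin P F x b) ->
  forall x y, F (x ⊔ y) -> P x -> P y -> F x \/ F y.
Proof.
  intros Pb Fb Hadj x y Fxy Px Py. apply NNPP. intro Nxy.
  destruct (Hadj x Px ltac:(tauto)) as [_ [g1 [Fg1 E1]]].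
  destruct (Hadj y Py ltac:(tauto)) as [_ [g2 [Fg2 E2]]].
  apply Fb. apply (filter_up HF (x := g1 ⊓ g2 ⊓ (x ⊔ y))); [| |exact Pb].
  - apply HF; [apply HF|]; assumption.
  - apply meet_join_mle.
    + exact (mle_trans (meet_monol x (meet_mlel g1 g2)) E1).
    + exact (mle_trans (meet_monol y (meet_mler g1 g2)) E2).
Qed.

End FilterIn.

Lemma filter_adjoin_mono P F G c z :
  (forall x, F x -> G x) -> filter_adjoin P F c z -> filter_adjoin P G c z.
Proof. intros FG [Pz [g [Fg E]]]. split; [exact Pz|]. exists g. auto. Qed.

Lemma is_filter_in_True F : is_filter A F <-> filter_in (fun _ => True) F.
Proof.
  split.
  - intros (Ftop & Fup & Fmeet). split; eauto.
  - intros [_ Ftop Fup Fmeet]. split; [|split]; eauto.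
Qed.

Section Ultrafilter.

Variable U : M A -> Prop.
Hypothesis HU : is_ultrafilter A U.

Lemma ultrafilter_filter_in : filter_in (fun _ => True) U.
Proof. apply is_filter_in_True, HU. Qed.

Lemma ultrafilter_proper : ~ U ⊥.
Proof. apply HU. Qed.

Lemma ultrafilter_adjoin_bot c : ~ U c -> filter_adjoin (fun _ => True) U c ⊥.
Proof.
  intro Uc. apply NNPP. intro N. apply Uc.
  destruct HU as [_ Umax].
  apply (Umax (filter_adjoin (fun _ => True) U c)).
  - split.
    + apply is_filter_in_True, filter_adjoin_filter; auto.
      apply ultrafilter_filter_in.
    + exact N.
  - intros x Ux. apply filter_adjoin_incl; [apply ultrafilter_filter_in | exact Ux].
  - apply filter_adjoin_elem; [apply ultrafilter_filter_in | exact I].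
Qed.

Lemma ultrafilter_prime x y : U (x ⊔ y) -> U x \/ U y.
Proof.
  intro Uxy. apply (filter_in_prime ultrafilter_filter_in (b := ⊥)); auto.
  - exact ultrafilter_proper.
  - intros c _. apply ultrafilter_adjoin_bot.
Qed.

End Ultrafilter.

Variable gamma : var -> M A.

Definition definable (z : M A) : Prop := exists p, eval A gamma p = z.

Lemma definable_eval p : definable (eval A gamma p).
Proof. exists p. reflexivity. Qed.

Lemma definable_bot : definable ⊥.
Proof. exact (definable_eval FBot). Qed.

Lemma definable_top : definable ⊤.
Proof. exists FTop. apply imp_bot_bot. Qed.

Lemma definable_meet x y : definable x -> definable y -> definable (x ⊓ y).
Proof. intros [p <-] [q <-]. exact (definable_eval (FAnd p q)). Qed.

Lemma definable_join x y : definable x -> definable y -> definable (x ⊔ y).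
Proof. intros [p <-] [q <-]. exact (definable_eval (FOr p q)). Qed.

Lemma definable_imp x y : definable x -> definable y -> definable (x ⇒ y).
Proof. intros [p <-] [q <-]. exact (definable_eval (FImp p q)). Qed.

Record prime_filter (w : M A -> Prop) : Prop := {
  prime_filter_in : filter_in definable w;
  prime_proper : ~ w ⊥;
  prime_join : forall x y, w (x ⊔ y) -> definable x -> definable y -> w x \/ w y
}.

Lemma definable_adjoin_filter F c :
  filter_in definable F -> filter_in definable (filter_adjoin definable F c).
Proof.
  intro HF. apply filter_adjoin_filter; [exact HF | exact definable_top | exact definable_meet].
Qed.

Section Lindenbaum.

Variables (F : M A -> Prop) (b : M A).
Hypotheses (HF : filter_in definable F) (HFb : ~ F b) (Hb : definable b).

(** Stage [n + 1] is stage [n] with the [n]-th definable element adjoined,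
    unless that would put [b] into the filter; the two implications encode
    this case distinction on a proposition. *)
Fixpoint stage (n : nat) : M A -> Prop :=
  match n with
  | 0 => F
  | S n =>
      let c := eval A gamma (enum_formula n) in
      fun z => (filter_adjoin definable (stage n) c b -> stage n z) /\
               (~ filter_adjoin definable (stage n) c b -> filter_adjoin definable (stage n) c z)
  end.

Lemma stage_cases n (c := eval A gamma (enum_formula n)) :
  (filter_adjoin definable (stage n) c b /\ forall z, stage (S n) z <-> stage n z) \/
  (~ filter_adjoin definable (stage n) c b /\
   forall z, stage (S n) z <-> filter_adjoin definable (stage n) c z).
Proof.
  destruct (classic (filter_adjoin definable (stage n) c b)) as [Hc | Hc];
    [left | right]; split; simpl; tauto.
Qed.

Lemma stage_filter n : filter_in definable (stage n) /\ ~ stage n b.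
Proof.
  induction n as [|n [IHF IHb]]; [split; assumption|].
  destruct (stage_cases n) as [[_ E] | [Hc E]]; split.
  - apply (filter_in_ext IHF). intro z. symmetry. apply E.
  - rewrite E. exact IHb.
  - apply (filter_in_ext (definable_adjoin_filter (eval A gamma (enum_formula n)) IHF)).
    intro z. symmetry. apply E.
  - rewrite E. exact Hc.
Qed.

Lemma stage_mono n m z : n <= m -> stage n z -> stage m z.
Proof.
  intros Hnm Hz. induction Hnm as [|m _ IH]; [exact Hz|].
  destruct (stage_cases m) as [[_ E] | [_ E]]; apply E; [exact IH|].
  apply filter_adjoin_incl; [apply stage_filter | exact IH].
Qed.

Definition stage_limit (z : M A) : Prop := exists n, stage n z.

Lemma stage_limit_filter : filter_in definable stage_limit.
Proof.
  split.
  - intros z [n Hz]. exact (filter_sub (proj1 (stage_filter n)) Hz).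
  - exists 0. apply HF.
  - intros x y [n Hx] Exy Py. exists n. exact (filter_up (proj1 (stage_filter n)) Hx Exy Py).
  - intros x y [n Hx] [m Hy]. exists (n + m). apply (proj1 (stage_filter (n + m))).
    + apply (stage_mono (n := n)); [apply PeanoNat.Nat.le_add_r | exact Hx].
    + apply (stage_mono (n := m)); [apply PeanoNat.Nat.le_add_l | exact Hy].
Qed.

Lemma stage_limit_not_b : ~ stage_limit b.
Proof. intros [n Hn]. exact (proj2 (stage_filter n) Hn). Qed.

Lemma stage_limit_adjoin x :
  definable x -> ~ stage_limit x -> filter_adjoin definable stage_limit x b.
Proof.
  intros [p <-] Nx. destruct (enum_formula_surj p) as [n <-].
  destruct (stage_cases n) as [[Hc _] | [_ E]].
  - apply (filter_adjoin_mono (F := stage n)); [|exact Hc]. intros y Hy. exists n. exact Hy.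
  - exfalso. apply Nx. exists (S n). apply E.
    apply filter_adjoin_elem; [apply stage_filter | apply definable_eval].
Qed.

Lemma prime_filter_extension :
  exists G, prime_filter G /\ (forall z, F z -> G z) /\ ~ G b.
Proof.
  exists stage_limit. split; [split|split].
  - exact stage_limit_filter.
  - intro Gbot. apply stage_limit_not_b.
    exact (filter_up stage_limit_filter Gbot (bot_mle b) Hb).
  - apply (filter_in_prime stage_limit_filter Hb stage_limit_not_b stage_limit_adjoin).
  - intros z Hz. exists 0. exact Hz.
  - exact stage_limit_not_b.
Qed.

End Lindenbaum.

Section PrimeFilter.

Variable w : M A -> Prop.
Hypothesis Hw : prime_filter w.

Lemma prime_filter_meet x y :
  definable x -> definable y -> w (x ⊓ y) <-> w x /\ w y.
Proof.
  intros Dx Dy. pose proof (prime_filter_in Hw) as Wf. split.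
  - intro Wxy. split; [apply (filter_up Wf Wxy (meet_mlel x y) Dx)
                      | apply (filter_up Wf Wxy (meet_mler x y) Dy)].
  - intros [Wx Wy]. apply Wf; assumption.
Qed.

Lemma prime_filter_join x y :
  definable x -> definable y -> w (x ⊔ y) <-> w x \/ w y.
Proof.
  intros Dx Dy. pose proof (prime_filter_in Hw) as Wf. split.
  - intro Wxy. apply Hw; assumption.
  - intros [Wx | Wy].
    + apply (filter_up Wf Wx (join_mgel x y) (definable_join Dx Dy)).
    + apply (filter_up Wf Wy (join_mger x y) (definable_join Dx Dy)).
Qed.

Lemma prime_filter_imp x y :
  definable x -> definable y ->
  w (x ⇒ y) <-> forall w', prime_filter w' -> (forall z, w z -> w' z) -> w' x -> w' y.
Proof.
  intros Dx Dy. pose proof (prime_filter_in Hw) as Wf. split.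
  - intros Wxy w' Hw' Sub Wx. pose proof (prime_filter_in Hw') as Wf'.
    apply (filter_up Wf' (x := x ⊓ (x ⇒ y))); [apply Wf'; auto | apply meet_imp_mle | exact Dy].
  - intro Hext. apply NNPP. intro Nxy.
    assert (Ny : ~ filter_adjoin definable w x y).
    { intros [_ [g [Wg E]]]. apply Nxy.
      exact (filter_up Wf Wg (proj1 (mle_imp x y g) E) (definable_imp Dx Dy)). }
    destruct (prime_filter_extension (definable_adjoin_filter x Wf) Ny Dy)
      as [w' [Hw' [Sub Nw']]].
    apply Nw', Hext; [exact Hw' | | ].
    + intros z Wz. apply Sub, filter_adjoin_incl; assumption.
    + apply Sub, filter_adjoin_elem; assumption.
Qed.

End PrimeFilter.

Definition world : Type := { w : M A -> Prop | prime_filter w }.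

Definition world_le (u v : world) : Prop := forall z, proj1_sig u z -> proj1_sig v z.

Lemma world_le_antisym u v : world_le u v -> world_le v u -> u = v.
Proof.
  destruct u as [u Hu], v as [v Hv]. unfold world_le. simpl. intros Luv Lvu.
  assert (u = v) as <-.
  { extensionality z. apply propositional_extensionality. split; auto. }
  f_equal. apply proof_irrelevance.
Qed.

Lemma chain_union_prime (C : world -> Prop) w0 :
  is_chain world_le C -> C w0 -> prime_filter (fun z => exists w, C w /\ proj1_sig w z).
Proof.
  intros HC Cw0. split; [split|..].
  - intros z [w [_ Wz]]. exact (filter_sub (prime_filter_in (proj2_sig w)) Wz).
  - exists w0. split; [exact Cw0 | exact (filter_top (prime_filter_in (proj2_sig w0)))].
  - intros x y [w [Cw Wx]] E Dy. exists w.
    split; [exact Cw | exact (filter_up (prime_filter_in (proj2_sig w)) Wx E Dy)].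
  - intros x y [u [Cu Ux]] [v [Cv Vy]].
    destruct (HC u v Cu Cv) as [Luv | Lvu]; [exists v | exists u]; split; auto;
      apply (prime_filter_in (proj2_sig _)); auto.
  - intros [w [_ Wbot]]. exact (prime_proper (proj2_sig w) Wbot).
  - intros x y [w [Cw Wxy]] Dx Dy.
    destruct (prime_join (proj2_sig w) Wxy Dx Dy); [left | right]; exists w; auto.
Qed.

End Heyting.

Arguments world_le {gamma}.

Section L5.

Hypothesis HA : is_L5_model A.
Variable gamma : var -> M A.

Let HH : is_heyting A := proj1 HA.

Lemma top_neq_bot : ⊤ <> ⊥.
Proof.
  pose proof HA as (_ & HU & _). intro E. apply (ultrafilter_proper HU).
  rewrite <- E. apply (filter_top (ultrafilter_filter_in HU)).
Qed.

Lemma box_top : f_box A ⊤ = ⊤.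
Proof. pose proof HA as (_ & _ & _ & _ & _ & _ & Hbox). apply Hbox. reflexivity. Qed.

Lemma box_neq_top m : m <> ⊤ -> f_box A m = ⊥.
Proof. pose proof HA as (_ & _ & _ & _ & _ & _ & Hbox). apply Hbox. Qed.

(** By axiom (iii), [□(x ⊔ y) ⊑ □x ⊔ □y]; by axiom (v) this reads [⊤ ⊑ ⊥]
    unless [x] or [y] is [⊤]. *)
Lemma join_eq_top x y : x ⊔ y = ⊤ -> x = ⊤ \/ y = ⊤.
Proof.
  intro E. apply NNPP. intro N. apply top_neq_bot.
  pose proof HA as (_ & _ & _ & _ & Hbox_join & _).
  pose proof (Hbox_join x y) as L.
  rewrite E, box_top, (box_neq_top (m := x)), (box_neq_top (m := y)), joinxx in L; try tauto.
  apply mle_antisym; [exact HH | exact L | apply bot_mle, HH].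
Qed.

Lemma prime_filter_top w : prime_filter gamma w -> w ⊤.
Proof. intro Hw. exact (filter_top (prime_filter_in Hw)). Qed.

Lemma prime_filter_box w m : prime_filter gamma w -> w (f_box A m) <-> m = ⊤.
Proof.
  intro Hw. split.
  - intro Wm. apply NNPP. intro N. rewrite box_neq_top in Wm by exact N.
    exact (prime_proper Hw Wm).
  - intros ->. rewrite box_top. apply prime_filter_top, Hw.
Qed.

Lemma prime_filter_top_only : prime_filter gamma (fun z => z = ⊤).
Proof.
  split; [split|..].
  - intros z ->. apply definable_top, HH.
  - reflexivity.
  - intros x y -> E _. apply mle_antisym; [exact HH | apply mle_top, HH | exact E].
  - intros x y -> ->. apply meetxx, HH.
  - intro E. apply top_neq_bot. symmetry. exact E.
  - intros x y E _ _. apply join_eq_top, E.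
Qed.

Definition true_definable (z : M A) : Prop := TRUE A z /\ definable gamma z.

Lemma prime_filter_true : prime_filter gamma true_definable.
Proof.
  pose proof HA as (_ & HU & _). pose proof (ultrafilter_filter_in HU) as Uf.
  split; [split|..].
  - intros z [_ Dz]. exact Dz.
  - split; [apply Uf | apply definable_top, HH].
  - intros x y [Tx _] E Dy. split; [exact (filter_up Uf Tx E I) | exact Dy].
  - intros x y [Tx Dx] [Ty Dy]. split; [apply Uf; assumption | apply definable_meet; assumption].
  - intros [Tbot _]. exact (ultrafilter_proper HU Tbot).
  - intros x y [Txy _] Dx Dy.
    destruct (ultrafilter_prime HH HU Txy); [left | right]; split; assumption.
Qed.

Definition bottom_world : world gamma := exist _ _ prime_filter_top_only.

Definition true_world : world gamma := exist _ _ prime_filter_true.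

Lemma bottom_world_least w : world_le bottom_world w.
Proof. intros z Hz. simpl in Hz. subst z. apply prime_filter_top, proj2_sig. Qed.

Lemma world_frame : is_L5_frame (world gamma) world_le bottom_world.
Proof.
  split; [|split; [|split; [|split]]].
  - intros w z Hz. exact Hz.
  - intros u v w Luv Lvw z Hz. auto.
  - apply world_le_antisym.
  - apply bottom_world_least.
  - intros C HC.
    set (C' := fun w => C w \/ w = bottom_world).
    assert (HC' : is_chain world_le C').
    { intros u v [Cu | ->] [Cv | ->]; auto using bottom_world_least. }
    exists (exist _ _ (chain_union_prime HC' (or_intror eq_refl))).
    intros w Cw z Wz. exists w. split; [left |]; assumption.
Qed.

(** If [z ∈ w] but [z ∉ TRUE], then [z ⇒ ⊥ ∈ TRUE ⊆ w], so [⊥ ∈ w]. *)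
Lemma true_world_maximal w : world_le true_world w -> w = true_world.
Proof.
  intro Sub. apply world_le_antisym; [|exact Sub].
  intros z Wz. pose proof (prime_filter_in (proj2_sig w)) as Wf.
  assert (Dz : definable gamma z) by exact (filter_sub Wf Wz).
  split; [|exact Dz]. apply NNPP. intro Tz.
  pose proof HA as (_ & HU & _).
  destruct (ultrafilter_adjoin_bot HH HU Tz) as [_ [t [Tt Et]]].
  assert (Wneg : proj1_sig w (z ⇒ ⊥)).
  { apply Sub. split.
    - exact (filter_up (ultrafilter_filter_in HU) Tt (proj1 (mle_imp HH z ⊥ t) Et) I).
    - apply definable_imp; [exact Dz | apply definable_bot]. }
  apply (prime_proper (proj2_sig w)).
  apply (filter_up Wf (x := z ⊓ (z ⇒ ⊥))); [apply Wf; assumption | apply meet_imp_mle, HH |].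
  apply definable_bot.
Qed.

Definition world_val (x : var) (w : world gamma) : Prop := proj1_sig w (gamma x).

Lemma truth_lemma p (w : world gamma) :
  ksat world_le bottom_world world_val w p <-> proj1_sig w (eval A gamma p).
Proof.
  revert w. induction p as [x | | p1 IH1 p2 IH2 | p1 IH1 p2 IH2 | p1 IH1 p2 IH2 | p IH];
    intro w; simpl.
  - reflexivity.
  - split; [contradiction | exact (prime_proper (proj2_sig w))].
  - rewrite IH1, IH2, (prime_filter_meet HH (proj2_sig w)); try apply definable_eval. tauto.
  - rewrite IH1, IH2, (prime_filter_join HH (proj2_sig w)); try apply definable_eval. tauto.
  - rewrite (prime_filter_imp HH (proj2_sig w)); try apply definable_eval. split.
    + intros K w' Hw' Sub W1.
      apply (IH2 (exist _ w' Hw')), K; [exact Sub | apply (IH1 (exist _ w' Hw')), W1].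
    + intros K w' Sub K1. apply IH2, (K _ (proj2_sig w') Sub), IH1, K1.
  - rewrite IH, (prime_filter_box _ (proj2_sig w)). reflexivity.
Qed.

End L5.

End Algebra.

Theorem theorem5p2 (A : L5Model) (HA : is_L5_model A) (gamma : var -> M A) :
  exists (W : Type) (R : W -> W -> Prop) (wB : W),
    is_L5_frame W R wB /\
    exists wT : W,
      (forall w, R wT w -> w = wT) /\
      exists g : var -> W -> Prop,
        is_frame_assignment R g /\
        forall phi : formula, msat A gamma phi <-> ksat R wB g wT phi.
Proof.
  exists (world gamma), (@world_le A gamma), (bottom_world HA gamma).
  split; [apply world_frame |].
  exists (true_world HA gamma). split; [apply true_world_maximal |].
  exists (world_val (gamma := gamma)). split.
  - intros x u v Luv Hu. exact (Luv _ Hu).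
  - intro phi. rewrite truth_lemma. simpl. unfold msat, true_definable.
    split; [intro T; split; [exact T | apply definable_eval] | tauto].
Qed.
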